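(* For every integer $n\ge 4$, the oriented path $Q_{n+1}$ is not homomorphic to $AC_n$.
   Context: For digraphs $G,H$, a homomorphism $G\to H$ is a map $\varphi:V_G\to V_H$ such that $(u,v)\in A_G$ implies $(\varphi(u),\varphi(v))\in A_H$. An oriented path $(p_0,\dots,p_k)$ consists of distinct vertices where for each $i$ exactly one of the arcs $p_ip_{i+1}$ (forward) or $p_{i+1}p_i$ (backward) is present, and no other arcs. For $n\ge 3$, $Q_n$ is the oriented path $(q_0,\dots,q_{n-1})$ on $n$ vertices such that: the first two arcs $q_0q_1$ and $q_1q_2$ are forward arcs; the subpath $(q_1,\dots,q_{n-2})$ is alternating (every two consecutive arcs have opposite directions); and the last two arcs (between $q_{n-3},q_{n-2}$ and between $q_{n-2},q_{n-1}$) have the same direction. For $n\ge 3$, $AC_n$ is the oriented cycle with vertices $a_0,\dots,a_{n-1}$ obtained from the alternating path $A_{n+1}=(a_0,\dots,a_n)$ — in which the arc between $a_i$ and $a_{i+1}$ is $a_i\to a_{i+1}$ if $i$ is even and $a_{i+1}\to a_i$ if $i$ is odd — by identifying $a_n$ with $a_0$. *)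

From mathcomp Require Import all_boot.
Set Implicit Arguments. Unset Strict Implicit. Unset Printing Implicit Defensive.

Definition is_hom (V W : finType) (A : rel V) (B : rel W) (phi : V -> W) : Prop :=
  forall u v, A u v -> B (phi u) (phi v).

Definition homomorphic (V W : finType) (A : rel V) (B : rel W) : Prop :=
  exists phi : V -> W, is_hom A B phi.

(* Q_m on vertices q_0..q_{m-1} = 'I_m.  The arc between q_i and q_{i+1}
   (0 <= i <= m-2) is forward (q_i -> q_{i+1}) iff Q_fwd m i:
   arcs 0,1 forward; arcs 1..m-3 alternate (so arc i forward iff i odd);
   arc m-2 has the same direction as arc m-3. *)
Definition Q_fwd (m i : nat) : bool := (i <= 1) || odd (minn i (m - 3)).

Definition Q_arc (m : nat) : rel 'I_m :=
  fun u v => ((v == u.+1 :> nat) && Q_fwd m u) || ((u == v.+1 :> nat) && ~~ Q_fwd m v).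

Definition AC_arc (n : nat) : rel 'I_n :=
  fun u v => ((v == u.+1 %% n :> nat) && ~~ odd u) || ((u == v.+1 %% n :> nat) && odd v).

From mathcomp Require Import all_boot.
From mathcomp Require Import zify.

Set Implicit Arguments.
Unset Strict Implicit.
Unset Printing Implicit Defensive.

(* A homomorphism phi : Q_{n+1} -> AC_n must map the directed 2-path
   q_0 -> q_1 -> q_2 onto the only directed 2-path a_{n-1} -> a_0 -> a_1 of
   AC_n, which exists only when n is odd.  Along the alternating part of
   Q_{n+1} every arc then moves one step along the cycle and the parity of
   the image is locked to that of the index, so phi(q_j) = a_i with i < j.
   But the last two arcs form the directed 2-path q_{n-2} -> q_{n-1} -> q_n,
   which would force phi(q_{n-2}) = a_{n-1}. *)

Lemma AC_arc_cases n (u v : 'I_n) : AC_arc u v ->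
  [\/ [/\ v = u.+1 :> nat, ~~ odd u & u.+1 < n],
      [/\ u.+1 = n, v = 0 :> nat & ~~ odd u],
      [/\ u = v.+1 :> nat, odd v & v.+1 < n]
    | [/\ v.+1 = n, u = 0 :> nat & odd v]].
Proof.
have lt_un := ltn_ord u; have lt_vn := ltn_ord v.
case/orP => /andP [/eqP e parity].
  have [lt_u1n | ge_u1n] := ltnP u.+1 n.
    by rewrite modn_small in e => //; apply: Or41.
  have u1_eq : u.+1 = n by lia.
  by rewrite u1_eq modnn in e; apply: Or42.
have [lt_v1n | ge_v1n] := ltnP v.+1 n.
  by rewrite modn_small in e => //; apply: Or43.
have v1_eq : v.+1 = n by lia.
by rewrite v1_eq modnn in e; apply: Or44.
Qed.

Lemma AC_directed_path2 n (u v w : 'I_n) : 1 < n ->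
  AC_arc u v -> AC_arc v w -> [/\ odd n, u.+1 = n, v = 0 :> nat & w = 1 :> nat].
Proof.
by move=> lt1n /AC_arc_cases uv /AC_arc_cases vw; case: uv => -[]; case: vw => -[];
  intros; split; lia.
Qed.

(* Away from the wrap-around arc, arcs leave even vertices and enter odd ones. *)
Lemma AC_arc_parity_step n (u v : 'I_n) : odd n -> u.+2 < n ->
  (if odd u then AC_arc v u else AC_arc u v) -> v = u.+1 :> nat \/ v.+1 = u :> nat.
Proof.
move=> odd_n lt_u2n; case: ifP => odd_u /AC_arc_cases [] []; intros; lia.
Qed.

Lemma Q_fwd_alternating m i : 2 <= i -> i <= m - 3 -> Q_fwd m i = odd i.
Proof. by move=> le2i leim; rewrite /Q_fwd (minn_idPl leim) leqNgt le2i. Qed.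

Lemma Q_fwd_last m : 4 <= m -> Q_fwd m (m - 2) = odd (m - 3).
Proof.
move=> le4m; rewrite /Q_fwd (minn_idPr _) ?leq_sub2l //.
by have -> : (m - 2 <= 1) = false by lia.
Qed.

Section HomToAC.

Variables (n : nat) (phi : 'I_n.+1 -> 'I_n).
Hypothesis phi_hom : is_hom (@Q_arc n.+1) (@AC_arc n) phi.

Let f k := phi (inord k).

Lemma hom_Q_step k : k < n ->
  if Q_fwd n.+1 k then AC_arc (f k) (f k.+1) else AC_arc (f k.+1) (f k).
Proof.
move=> lt_kn; case fwd: (Q_fwd n.+1 k); apply: phi_hom;
  rewrite /Q_arc !inordK ?fwd ?eqxx ?orbT //; lia.
Qed.

Hypothesis odd_n : odd n.

Lemma hom_alternating_lag j : 2 <= j <= n - 2 -> f 2 = 1 :> nat -> f j < j /\ odd (f j + j).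
Proof.
move=> + f2; elim: j => [|j IH] bounds_j; first lia.
have [lt_j2 | le2j] := ltnP j 2.
  have -> : j.+1 = 2 by lia.
  by rewrite f2.
have [lt_fj odd_fj] := IH ltac:(lia).
have := hom_Q_step (k := j) ltac:(lia).
rewrite Q_fwd_alternating; [|lia|lia].
have -> : odd j = ~~ odd (f j) by move: odd_fj; rewrite oddD; case: (odd j); case: odd.
rewrite if_neg => /(AC_arc_parity_step odd_n) step.
by have [e | e] := step ltac:(lia); split; lia.
Qed.

End HomToAC.

Theorem mainTheorem5 (n : nat) (hn : 4 <= n) :
  ~ homomorphic (@Q_arc n.+1) (@AC_arc n).
Proof.
case=> phi phi_hom; have lt1n : 1 < n by lia.
have head := AC_directed_path2 lt1n
  (hom_Q_step phi_hom (k := 0) ltac:(lia)) (hom_Q_step phi_hom (k := 1) ltac:(lia)).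
have [odd_n _ _ f2] := head.
have [lt_f _] := hom_alternating_lag phi_hom odd_n (j := n - 2) ltac:(lia) f2.
have fwd_n2 : Q_fwd n.+1 (n - 2) by rewrite Q_fwd_alternating //; lia.
have fwd_n1 : Q_fwd n.+1 (n - 1).
  by rewrite (_ : n - 1 = n.+1 - 2) ?Q_fwd_last //; lia.
have tail1 := hom_Q_step phi_hom (k := n - 2) ltac:(lia).
have tail2 := hom_Q_step phi_hom (k := n - 1) ltac:(lia).
rewrite fwd_n2 fwd_n1 (_ : (n - 2).+1 = n - 1) in tail1 tail2; last lia.
by have [_ last_n2 _ _] := AC_directed_path2 lt1n tail1 tail2; lia.
Qed.
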